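(* Let $H=(\mathcal{V},\mathcal{I})$ be an interval hypergraph, and let $H'=(\mathcal{V}',\mathcal{I}')$ be constructed from $H$ as follows: colour every point of $\mathcal{V}$ white; for every pair $I_i,I_j\in\mathcal{I}$ with $I_j\subseteq I_i$, colour every point of $I_i\setminus I_j$ black; assume every interval of $\mathcal{I}$ contains at least one white point; let $\mathcal{V}'$ be the set of white points and let $\mathcal{I}'$ consist of the sets $I\cap\mathcal{V}'$ for $I\in\mathcal{I}$ (keeping one copy among sets with equal endpoints). Then $H$ is exactly hittable if and only if $H'$ is exactly hittable.
   Context: An interval hypergraph has a finite linearly ordered vertex set (points on a line) and hyperedges that are intervals (sets of consecutive points). A hypergraph is exactly hittable if there is a set $S$ of vertices with $|S\cap I|=1$ for every hyperedge $I$. *)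

From mathcomp Require Import all_boot all_order.
Set Implicit Arguments. Unset Strict Implicit. Unset Printing Implicit Defensive.

(* Vertices: the n points 0 < 1 < ... < n-1 of 'I_n, linearly ordered.
   Hyperedges: a finite list of subsets of 'I_n. *)

Definition is_interval n (I : {set 'I_n}) : Prop :=
  forall x y z : 'I_n, x \in I -> z \in I -> x <= y -> y <= z -> y \in I.

Definition interval_hypergraph n (E : seq {set 'I_n}) : Prop :=
  forall J, J \in E -> is_interval J.

Definition exactly_hittable n (V : {set 'I_n}) (E : seq {set 'I_n}) : Prop :=
  exists S : {set 'I_n}, S \subset V /\ forall J, J \in E -> #|S :&: J| = 1.

Definition black n (E : seq {set 'I_n}) : {set 'I_n} :=
  [set x | [exists i : 'I_(size E), exists j : 'I_(size E),
     (nth set0 E j \subset nth set0 E i) && (x \in nth set0 E i :\: nth set0 E j)]].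

Definition white n (E : seq {set 'I_n}) : {set 'I_n} := ~: black E.

(* The reduced hypergraph H' = (V', I'). Keeping duplicates is harmless for
   exact hittability (a hyperedge listed twice imposes the same constraint). *)
Definition reduced_edges n (E : seq {set 'I_n}) : seq {set 'I_n} :=
  [seq J :&: white E | J <- E].

From mathcomp Require Import all_boot all_order.
Set Implicit Arguments. Unset Strict Implicit. Unset Printing Implicit Defensive.

(* If S meets both J and K ⊆ J exactly once, its point in J is its point in K,
   so S avoids J \ K.  Hence an exact hitting set consists of white points only,
   and for a set of white points meeting I and meeting I ∩ V' are the same
   constraint. *)

Lemma exact_hit_subset (T : finType) (S J K : {set T}) :
  K \subset J -> #|S :&: J| = 1 -> #|S :&: K| = 1 -> S :&: J \subset K.
Proof.
move=> KJ SJ1 SK1; have SKJ : S :&: K \subset S :&: J by apply: setIS.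
have <- : S :&: K = S :&: J by apply/eqP; rewrite eqEcard SKJ SJ1 SK1.
exact: subsetIr.
Qed.

Lemma setI_subset_restrict (T : finType) (S W J : {set T}) :
  S \subset W -> S :&: (J :&: W) = S :&: J.
Proof. by move=> SW; rewrite setIA setIAC (setIidPl SW). Qed.

Lemma exact_hitting_set_white n (E : seq {set 'I_n}) (S : {set 'I_n}) :
  (forall J, J \in E -> #|S :&: J| = 1) -> S \subset white E.
Proof.
move=> hitS; apply/subsetP => x xS; rewrite inE; apply/negP.
rewrite inE => /existsP [i /existsP [j /andP [EjEi /setDP [xEi xEj]]]].
have /subsetP/(_ x) := exact_hit_subset EjEi (hitS _ (mem_nth _ (ltn_ord i)))
  (hitS _ (mem_nth _ (ltn_ord j))).
by rewrite inE xS xEi (negbTE xEj) => /(_ isT).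
Qed.

Theorem lemma11 (n : nat) (E : seq {set 'I_n}) :
  interval_hypergraph E ->
  (forall J, J \in E -> J :&: white E != set0) ->
  exactly_hittable [set: 'I_n] E <-> exactly_hittable (white E) (reduced_edges E).
Proof.
move=> _ _; split.
- case=> S [_ hitS]; have SW := exact_hitting_set_white hitS.
  exists S; split => // _ /mapP [J JE ->].
  by rewrite setI_subset_restrict ?hitS.
- case=> S [SW hitS]; exists S; split; first exact: subsetT.
  by move=> J JE; rewrite -(setI_subset_restrict J SW) hitS //; apply: map_f.
Qed.
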